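(* Let $G$ be a graph and $\ell=\mathrm{OPT}(G)-\mathrm{LP}(G)$. There exists a set $X\subseteq V(G)$ with $|X|\le 2\ell$ such that $\mathrm{OPT}(G-X)=\mathrm{LP}(G-X)$.
   Context: $\mathrm{OPT}(G)$ is the minimum size of a vertex cover of $G$; $\mathrm{LP}(G)=\min\{\sum_{v\in V(G)}x_v : x_u+x_v\ge1\text{ for all }\{u,v\}\in E(G),\ 0\le x_v\le1\}$. *)

From HB Require Import structures.
From mathcomp Require Import all_boot all_order all_algebra.
Set Implicit Arguments. Unset Strict Implicit. Unset Printing Implicit Defensive.
Import Order.TTheory GRing.Theory Num.Theory.
Local Open Scope ring_scope.

(* A simple graph: vertex type T : finType, adjacency e : rel T
   (symmetric, irreflexive; assumed in the theorem).
   Subgraphs induced on a vertex set V : {set T} are handled by restricting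
   everything to V; G - X is the subgraph induced on ~: X. *)

Definition is_vc (T : finType) (e : rel T) (V C : {set T}) : bool :=
  (C \subset V) &&
  [forall u in V, forall v in V, e u v ==> (u \in C) || (v \in C)].

(* OPT: the minimum size of a vertex cover of the induced graph on V
   (V itself is always a cover, so the arg min is well defined). *)
Definition opt (T : finType) (e : rel T) (V : {set T}) : nat :=
  #|[arg min_(C < V | is_vc e V C) #|C|]|%N.

Definition lp_feasible (R : realFieldType) (T : finType) (e : rel T)
    (V : {set T}) (x : T -> R) : Prop :=
  (forall v, v \in V -> (0 <= x v) /\ (x v <= 1)) /\
  (forall u v, u \in V -> v \in V -> e u v -> 1 <= x u + x v).

Definition is_lp_value (R : realFieldType) (T : finType) (e : rel T)
    (V : {set T}) (r : R) : Prop :=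
  (exists x : T -> R, lp_feasible e V x /\ \sum_(v in V) x v = r) /\
  (forall x : T -> R, lp_feasible e V x -> r <= \sum_(v in V) x v).

From HB Require Import structures.
From mathcomp Require Import all_boot all_order all_algebra.
From mathcomp Require Import zify lra.
Set Implicit Arguments. Unset Strict Implicit. Unset Printing Implicit Defensive.
Import Order.TTheory GRing.Theory Num.Theory.
Local Open Scope ring_scope.

(* We prove, by induction on the vertex set V, that V has a "good" set X:
   V :\: X is LP-tight (some vertex cover is no larger than any fractional
   cover), and some fractional cover x of V satisfies
   #|X| + 2 (value of x) <= 2 OPT(V); for V the whole graph this yields
   #|X| <= 2 (OPT - LP) and OPT(G - X) = LP(G - X).

   The only LP fact used is a Hall-type bound (hall_lp_bound): if P satisfies
   Hall's condition into Q, every fractional cover spends at least #|P| on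
   P and Q.  The induction step then distinguishes two cases.
   - V has a crown, a nonempty independent set I with #|N(I)| <= #|I|: for
     one of minimum excess, N(I) satisfies Hall's condition into I, so I and
     N(I) can be removed, paying #|N(I)| in both OPT and LP (CrownReduction).
   - V has no crown: then V minus any vertex satisfies Hall's condition into
     itself, so LP >= (#|V| - 1) / 2 there, and removing one vertex of an
     optimal cover keeps the deletion bound (no_crown_good). *)

Lemma sum_subset_split (T : finType) (R : realFieldType) (A B : {set T}) (f : T -> R) :
  A \subset B -> \sum_(i in B) f i = \sum_(i in A) f i + \sum_(i in B :\: A) f i.
Proof. by move=> sAB; rewrite (big_setID A) /= (setIidPr sAB). Qed.

Lemma card_subset_split (T : finType) (A B : {set T}) :
  A \subset B -> #|B| = (#|A| + #|B :\: A|)%N.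
Proof. by move=> sAB; rewrite -(cardsID A B) (setIidPr sAB). Qed.

Section HallBound.
Variables (T : finType) (r : rel T).

Definition nbr (Q S : {set T}) : {set T} := [set q in Q | [exists p in S, r p q]].

Lemma nbrP (Q S : {set T}) q :
  reflect (q \in Q /\ exists2 p, p \in S & r p q) (q \in nbr Q S).
Proof. by rewrite inE; apply: (iffP andP) => -[qQ /exists_inP]. Qed.

Lemma nbr_sub (Q S : {set T}) : nbr Q S \subset Q.
Proof. by apply/subsetP => q /nbrP[]. Qed.

Definition hall (P Q : {set T}) : Prop :=
  forall S : {set T}, S \subset P -> (#|S| <= #|nbr Q S|)%N.

Lemma hall_restrict (P Q S : {set T}) :
  hall P Q -> S \subset P -> hall S (nbr Q S).
Proof.
move=> hPQ sSP S' sS'S; apply: leq_trans (hPQ S' (subset_trans sS'S sSP)) _.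
apply/subset_leq_card/subsetP => q /nbrP[qQ [p pS' rpq]].
have pS : p \in S := subsetP sS'S p pS'.
by apply/nbrP; split; [apply/nbrP; split=> //; exists p | exists p].
Qed.

Lemma hall_contract (P Q S : {set T}) :
  hall P Q -> S \subset P -> (#|nbr Q S| <= #|S|)%N ->
  hall (P :\: S) (Q :\: nbr Q S).
Proof.
move=> hPQ sSP tightS S' sS'.
have dis : [disjoint S' & S].
  rewrite -setI_eq0 -subset0; apply/subsetP => x; rewrite inE => /andP[xS' xS].
  by move: (subsetP sS' x xS'); rewrite inE xS.
have := hPQ (S' :|: S); rewrite subUset sSP (subset_trans sS' (subsetDl _ _)) => /(_ isT).
rewrite cardsU (disjoint_setI0 dis) cards0 subn0.
have sub : nbr Q (S' :|: S) \subset nbr (Q :\: nbr Q S) S' :|: nbr Q S.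
  apply/subsetP => q /nbrP[qQ [p]]; rewrite in_setU => /orP[pS' | pS] rpq; last first.
    by rewrite in_setU; apply/orP; right; apply/nbrP; split=> //; exists p.
  rewrite in_setU; case: (boolP (q \in nbr Q S)) => qN; rewrite ?orbT //= orbF.
  by apply/nbrP; split; [rewrite inE qN | exists p].
have [cardU _] := leq_card_setU (nbr (Q :\: nbr Q S) S') (nbr Q S).
by have := subset_leq_card sub; lia.
Qed.

Lemma hall_drop (P Q : {set T}) p q :
  (forall S : {set T}, S \proper P -> S != set0 -> (#|S| < #|nbr Q S|)%N) ->
  p \in P -> hall (P :\ p) (Q :\ q).
Proof.
move=> surplus pP S sS; have [->|S0] := eqVneq S set0; first by rewrite cards0.
have pS : p \notin S by apply/negP => /(subsetP sS); rewrite !inE eqxx.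
have /(surplus _)/(_ S0) : S \proper P.
  by apply/properP; split; [exact: subset_trans sS (subsetDl _ _) | exists p].
have sub : nbr Q S :\ q \subset nbr (Q :\ q) S.
  by apply/subsetP => x; rewrite !inE => /andP[-> /andP[-> ->]].
by have := subset_leq_card sub; have := cardsD1 q (nbr Q S); case: (q \in _); lia.
Qed.

Variables (R : realFieldType) (y z : T -> R).

Definition hall_bound (P Q : {set T}) : Prop :=
  #|P|%:R <= \sum_(p in P) y p + \sum_(q in Q) z q.

Lemma hall_bound_glue (P Q S N : {set T}) :
  S \subset P -> N \subset Q -> hall_bound S N -> hall_bound (P :\: S) (Q :\: N) ->
  hall_bound P Q.
Proof.
rewrite /hall_bound => sSP sNQ hSN hrest.
rewrite (sum_subset_split y sSP) (sum_subset_split z sNQ) (card_subset_split sSP) natrD.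
lra.
Qed.

(* LP duality in its simplest form: if P satisfies Hall's condition into Q,
   z is nonnegative on Q and y p + z q >= 1 on every r-edge from P to Q, then
   #|P| <= sum_P y + sum_Q z.  (P could be matched into Q, and each matching
   edge contributes at least 1.)  The proof splits off a nonempty proper tight
   set if there is one, and otherwise a single edge. *)
Lemma hall_lp_bound (P Q : {set T}) :
  hall P Q -> (forall q, q \in Q -> 0 <= z q) ->
  (forall p q, p \in P -> q \in Q -> r p q -> 1 <= y p + z q) ->
  hall_bound P Q.
Proof.
have [n] := ubnP #|P|; elim: n P Q => // n IH P Q ltPn hPQ hz hyz.
have [->|/set0Pn[p pP]] := eqVneq P set0.
  by rewrite /hall_bound cards0 big_set0 add0r; exact: sumr_ge0.
have hzD (N : {set T}) q : q \in Q :\: N -> 0 <= z q by rewrite inE => /andP[_ /hz].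
case: (boolP [exists S : {set T}, [&& S \proper P, S != set0 & (#|nbr Q S| <= #|S|)%N]]).
  case/existsP => S /and3P[ltSP S0 tightS]; have sSP := proper_sub ltSP.
  apply: (hall_bound_glue sSP (nbr_sub Q S)); apply: IH.
  - by move: ltSP; rewrite properEcard => /andP[_]; lia.
  - exact: hall_restrict hPQ sSP.
  - by move=> q /(subsetP (nbr_sub Q S)) /hz.
  - by move=> p' q p'S /(subsetP (nbr_sub Q S)); apply/hyz/(subsetP sSP).
  - by rewrite (card_subset_split sSP) in ltPn; move: S0; rewrite -card_gt0; lia.
  - exact: hall_contract hPQ sSP tightS.
  - exact: hzD.
  - by move=> p' q; rewrite !inE => /andP[_ p'P] /andP[_ qQ]; apply: hyz.
rewrite negb_exists => /forallP noTight.
have surplus (S : {set T}) : S \proper P -> S != set0 -> (#|S| < #|nbr Q S|)%N.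
  by move=> ltSP S0; move: (noTight S); rewrite ltSP S0 /= ltnNge.
have /set0Pn[q /nbrP[qQ [_ /set1P -> rpq]]] : nbr Q [set p] != set0.
  by rewrite -card_gt0 (leq_trans _ (hPQ _ _)) ?cards1 // sub1set.
have sp : [set p] \subset P by rewrite sub1set.
have sq : [set q] \subset Q by rewrite sub1set.
apply: (hall_bound_glue sp sq).
  by rewrite /hall_bound cards1 !big_set1; exact: hyz.
apply: IH; rewrite -?setDDl.
- by rewrite (cardsD1 p P) pP in ltPn.
- exact: hall_drop.
- exact: hzD.
- by move=> p' q'; rewrite !inE => /andP[_ p'P] /andP[_ q'Q]; apply: hyz.
Qed.
End HallBound.

Section VertexCover.
Variables (T : finType) (e : rel T) (R : realFieldType).

Lemma vcP (V C : {set T}) :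
  reflect (C \subset V /\
           forall u w, u \in V -> w \in V -> e u w -> (u \in C) || (w \in C))
          (is_vc e V C).
Proof.
apply: (iffP andP) => -[sCV h]; split => //.
  by move=> u w uV wV; move: h => /forall_inP/(_ u uV)/forall_inP/(_ w wV)/implyP.
by apply/forall_inP => u uV; apply/forall_inP => w wV; apply/implyP; apply: h.
Qed.

Lemma vc_self (V : {set T}) : is_vc e V V.
Proof. by apply/vcP; split => // u w ->. Qed.

Lemma opt_spec (V : {set T}) : exists2 C, is_vc e V C & #|C| = opt e V.
Proof. by rewrite /opt; case: arg_minnP; [exact: vc_self | move=> C hC _; exists C]. Qed.

Lemma opt_min (V C : {set T}) : is_vc e V C -> (opt e V <= #|C|)%N.
Proof. by rewrite /opt => hC; case: arg_minnP; [exact: vc_self | move=> C' _; apply]. Qed.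

Lemma vc_restrict (V W C : {set T}) :
  W \subset V -> is_vc e V C -> is_vc e W (W :&: C).
Proof.
move=> sWV /vcP[_ hC]; apply/vcP; split; first exact: subsetIl.
move=> u w uW wW euw; rewrite !inE uW wW.
exact: hC (subsetP sWV u uW) (subsetP sWV w wW) euw.
Qed.

Lemma feasible_sub (V W : {set T}) (x : T -> R) :
  W \subset V -> lp_feasible e V x -> lp_feasible e W x.
Proof.
move=> sWV [h01 hedge]; split; first by move=> v /(subsetP sWV); apply: h01.
by move=> u v /(subsetP sWV) uV /(subsetP sWV) vV; apply: hedge.
Qed.

Lemma feasible_ge0 (V : {set T}) (x : T -> R) v :
  lp_feasible e V x -> v \in V -> 0 <= x v.
Proof. by case=> h _ /h[]. Qed.

Definition indicator (C : {set T}) (v : T) : R := (v \in C)%:R.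

Lemma sum_indicator (A C : {set T}) : \sum_(v in A) indicator C v = #|A :&: C|%:R.
Proof.
rewrite (big_setID C) /= [X in _ + X]big1 ?addr0; last first.
  by move=> v; rewrite !inE /indicator => /andP[/negbTE ->].
rewrite (eq_bigr (fun _ => 1)) ?sumr_const //.
by move=> v; rewrite !inE /indicator => /andP[_ ->].
Qed.

Lemma cover_feasible (V C : {set T}) : is_vc e V C -> lp_feasible e V (indicator C).
Proof.
move=> /vcP[_ hC]; split; first by move=> v _; rewrite /indicator ler0n lern1 leq_b1.
move=> u w uV wV /(hC u w uV wV); rewrite /indicator.
by case: (u \in C); case: (w \in C); rewrite //= ?addr0 ?add0r ?lerDl.
Qed.

Definition lp_tight (W : {set T}) : Prop :=
  exists2 C, is_vc e W C &
    forall x : T -> R, lp_feasible e W x -> #|C|%:R <= \sum_(v in W) x v.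

Lemma lp_tight_value (W : {set T}) : lp_tight W -> is_lp_value e W ((opt e W)%:R : R).
Proof.
case=> C vcC lbC; have [C0 vcC0 c0] := opt_spec W; split.
  exists (indicator C0); split; first exact: cover_feasible.
  by case/vcP: vcC0 => sC0 _; rewrite sum_indicator (setIidPr sC0) c0.
by move=> x fx; apply: le_trans (lbC x fx); rewrite ler_nat opt_min.
Qed.

(* A certificate that deleting X costs at most twice the integrality gap:
   a fractional cover x of V with #|X| + 2 (value of x) <= 2 OPT(V). *)
Definition deletion_bound (V X : {set T}) : Prop :=
  exists2 x : T -> R, lp_feasible e V x &
    #|X|%:R + 2 * \sum_(v in V) x v <= 2 * (opt e V)%:R.

Definition good (V X : {set T}) : Prop :=
  [/\ X \subset V, lp_tight (V :\: X) & deletion_bound V X].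

Lemma edgeless_good (V : {set T}) : opt e V = 0%N -> good V set0.
Proof.
move=> opt0; have [C0 /vcP[_ hC0]] := opt_spec V.
rewrite opt0 => /eqP; rewrite cards_eq0 => /eqP C00.
have noedge u w : u \in V -> w \in V -> ~~ e u w.
  by move=> uV wV; apply/negP => /(hC0 u w uV wV); rewrite C00 !inE.
split; first exact: sub0set.
  rewrite setD0; exists set0.
    apply/vcP; split=> [|u w uV wV euw]; first exact: sub0set.
    by move: (noedge u w uV wV); rewrite euw.
  by move=> x fx; rewrite cards0; apply: sumr_ge0 => v /(feasible_ge0 fx).
exists (fun=> 0); last by rewrite cards0 big1 // opt0 mulr0 addr0.
split=> [v _|u w uV wV euw]; first by rewrite lexx ler01.
by move: (noedge u w uV wV); rewrite euw.
Qed.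

Definition indep (I : {set T}) : bool := [forall u in I, forall w in I, ~~ e u w].

Lemma indepP (I : {set T}) :
  reflect (forall u w, u \in I -> w \in I -> ~~ e u w) (indep I).
Proof.
apply: (iffP forall_inP) => [h u w uI wI | h u uI].
  by move: (h u uI) => /forall_inP; apply.
by apply/forall_inP => w; apply: h.
Qed.

Definition crown (V I : {set T}) : bool :=
  [&& I \subset V, I != set0, indep I & (#|nbr e V I| <= #|I|)%N].

(* Crowns are compared by #|N(I)| - #|I|, written without subtraction. *)
Definition crown_weight (V I : {set T}) : nat := (#|nbr e V I| + #|V :\: I|)%N.

Lemma indep_nbr (V I : {set T}) u : indep I -> u \in I -> u \notin nbr e V I.
Proof.
move=> /indepP indI uI; apply/negP => /nbrP[_ [p pI epu]].
by move: (indI p u pI uI); rewrite epu.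
Qed.

Hypothesis esym : symmetric e.

(* The neighbourhood H of a crown of minimum weight satisfies Hall's condition
   into the crown: otherwise the vertices of I with no neighbour in a violating
   S included in H would form a crown of smaller weight. *)
Lemma min_crown_hall (V I : {set T}) :
  crown V I -> (forall J, crown V J -> (crown_weight V I <= crown_weight V J)%N) ->
  hall e (nbr e V I) I.
Proof.
move=> /and4P[sIV _ /indepP indI tightI] minI S sSH; rewrite leqNgt; apply/negP => ltS.
set H := nbr e V I in sSH tightI minI *; set I' := I :\: nbr e I S.
have sI'I : I' \subset I := subsetDl _ _.
have sN' : nbr e V I' \subset H :\: S.
  apply/subsetP => u /nbrP[uV [p pI' epu]]; move: pI'; rewrite /I' in_setD => /andP[pNS pI].
  rewrite in_setD; apply/andP; split; last by apply/nbrP; split=> //; exists p.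
  apply/negP => uS; move/negP: pNS; apply; apply/nbrP; split=> //.
  by exists u; rewrite // esym.
have c1 := card_subset_split (nbr_sub e I S); rewrite -/I' in c1.
have c2 := card_subset_split sSH.
have c3 := subset_leq_card sN'.
have c4 := subset_leq_card sSH.
have [I'0|I'0] := eqVneq I' set0.
  by move: c1; rewrite I'0 cards0; lia.
have crownI' : crown V I'.
  apply/and4P; split => //; first exact: subset_trans sI'I sIV.
    by apply/indepP => u w /(subsetP sI'I) uI /(subsetP sI'I); apply: indI.
  lia.
have := minI I' crownI'; rewrite /crown_weight -/H.
have := card_subset_split sIV; have := card_subset_split (subset_trans sI'I sIV).
lia.
Qed.

Section CrownReduction.
Variables (V I : {set T}).
Hypotheses (sIV : I \subset V) (indI : indep I) (hallHI : hall e (nbr e V I) I).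

Local Notation H := (nbr e V I).
Local Notation V' := (V :\: (I :|: H)).

Let sIHV : I :|: H \subset V. Proof. by rewrite subUset sIV nbr_sub. Qed.

Lemma crown_avoids (X : {set T}) : X \subset V' -> I :|: H \subset V :\: X.
Proof.
move=> sXV'; apply/subsetP => u uIH; rewrite in_setD (subsetP sIHV u uIH) andbT.
by apply/negP => /(subsetP sXV'); rewrite in_setD uIH.
Qed.

Lemma sum_crown_split (X : {set T}) (f : T -> R) :
  X \subset V' ->
  \sum_(v in V :\: X) f v = \sum_(v in V' :\: X) f v + \sum_(v in H) f v + \sum_(v in I) f v.
Proof.
move=> sXV'; have sIHVX := crown_avoids sXV'.
have eqI : (I :|: H) :\: H = I.
  apply/setP => u; rewrite in_setD in_setU.
  have [uI|_] := boolP (u \in I); last by case: (u \in H).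
  by rewrite (indep_nbr V indI uI).
rewrite (sum_subset_split f sIHVX) (sum_subset_split f (subsetUr I H)) eqI.
rewrite [in LHS]addrC addrA; congr (_ + _ + _); apply: eq_bigl => u.
by rewrite !in_setD !in_setU; case: (u \in X); case: (u \in I); case: (u \in H); case: (u \in V).
Qed.

Lemma crown_lp_bound (W : {set T}) (y : T -> R) :
  I :|: H \subset W -> lp_feasible e W y ->
  #|H|%:R <= \sum_(v in H) y v + \sum_(v in I) y v.
Proof.
move=> sIHW fy; have inW u : u \in I :|: H -> u \in W := subsetP sIHW u.
apply: (hall_lp_bound hallHI) => [q qI | p q pH qI epq].
  by apply: (feasible_ge0 fy); apply: inW; rewrite inE qI.
by case: fy => _; apply => //; apply: inW; rewrite inE ?pH ?qI ?orbT.
Qed.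

(* Every cover of V uses at least #|H| vertices of I :|: H. *)
Lemma crown_opt : (opt e V' + #|H| <= opt e V)%N.
Proof.
have [C0 vcC0 c0] := opt_spec V; have sC0V : C0 \subset V by case/vcP: vcC0.
have hV' := opt_min (vc_restrict (subsetDl V (I :|: H)) vcC0).
have hH := crown_lp_bound sIHV (cover_feasible vcC0).
have := sum_crown_split (indicator C0) (sub0set V'); rewrite !setD0.
rewrite !sum_indicator (setIidPr sC0V) c0 in hH * => split.
rewrite -(ler_nat R) natrD; rewrite -(ler_nat R) in hV'.
lra.
Qed.

(* A cover C of the reduced graph, together with H, covers V :\: X; the LP
   bound of H on I :|: H shows that LP-tightness survives. *)
Lemma crown_tight (X : {set T}) :
  X \subset V' -> lp_tight (V' :\: X) -> lp_tight (V :\: X).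
Proof.
move=> sXV' [C /vcP[sCV' hC] lbC]; exists (C :|: H).
  apply/vcP; split.
    rewrite subUset (subset_trans sCV' (setSD _ (subsetDl _ _))) /=.
    exact: subset_trans (subsetUr I H) (crown_avoids sXV').
  move=> u w; rewrite !in_setU !in_setD => /andP[uX uV] /andP[wX wV] euw.
  have [uH|uH] := boolP (u \in H); first by rewrite orbT.
  have [wH|wH] := boolP (w \in H); first by rewrite !orbT.
  have [uI|uI] := boolP (u \in I).
    by case/negP: wH; apply/nbrP; split=> //; exists u.
  have [wI|wI] := boolP (w \in I).
    by case/negP: uH; apply/nbrP; split=> //; exists w; rewrite // esym.
  have inV'X v : v \notin X -> v \in V -> v \notin I -> v \notin H -> v \in V' :\: X.
    by move=> vX vV vI vH; rewrite !in_setD in_setU negb_or vX vI vH vV.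
  by case/orP: (hC u w (inV'X u uX uV uI uH) (inV'X w wX wV wI wH) euw) => ->; rewrite ?orbT.
move=> y fy; rewrite (sum_crown_split y sXV').
have hC' := lbC y (feasible_sub (setSD _ (subsetDl _ _)) fy).
have hH := crown_lp_bound (crown_avoids sXV') fy.
have hCH : (#|C :|: H| <= #|C| + #|H|)%N by case: (leq_card_setU C H).
rewrite -(ler_nat R) natrD in hCH; lra.
Qed.

(* A fractional cover of the reduced graph, extended by 1 on H and 0 on I,
   is feasible on V; by crown_opt the deletion bound is preserved. *)
Lemma crown_deletion (X : {set T}) : deletion_bound V' X -> deletion_bound V X.
Proof.
case=> x fx boundx.
pose x' u : R := if u \in H then 1 else if u \in I then 0 else x u.
have x'V' u : u \in V' -> x' u = x u.
  by rewrite !in_setD in_setU negb_or => /andP[/andP[/negbTE uI /negbTE uH] _]; rewrite /x' uI uH.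
have x'ge0 u : u \in V -> 0 <= x' u.
  move=> uV; rewrite /x'; case: ifP => // uH; case: ifP => // uI.
  by apply: (feasible_ge0 fx); rewrite in_setD in_setU uI uH.
exists x'.
  split=> [u uV | u w uV wV euw].
    split; first exact: x'ge0.
    rewrite /x'; case: ifP => // uH; case: ifP => // uI.
    by case: fx => /(_ u); rewrite in_setD in_setU uI uH uV => /(_ isT)[].
  have [uH|uH] := boolP (u \in H); first by rewrite {1}/x' uH lerDl x'ge0.
  have [wH|wH] := boolP (w \in H); first by rewrite [x' w]/x' wH lerDr x'ge0.
  have [uI|uI] := boolP (u \in I).
    by case/negP: wH; apply/nbrP; split=> //; exists u.
  have [wI|wI] := boolP (w \in I).
    by case/negP: uH; apply/nbrP; split=> //; exists w; rewrite // esym.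
  have inV' v : v \in V -> v \notin I -> v \notin H -> v \in V'.
    by move=> vV vI vH; rewrite in_setD in_setU negb_or vI vH vV.
  rewrite (x'V' u (inV' u uV uI uH)) (x'V' w (inV' w wV wI wH)).
  by case: fx => _; apply => //; apply: inV'.
have := sum_crown_split x' (sub0set V'); rewrite !setD0 => ->.
rewrite (eq_bigr x x'V') [\sum_(v in H) _](eq_bigr (fun=> 1)) => [|u uH]; last by rewrite /x' uH.
rewrite [\sum_(v in I) _]big1 => [|u uI]; last by rewrite /x' (negbTE (indep_nbr V indI uI)) uI.
have := crown_opt; rewrite -(ler_nat R) natrD sumr_const; lra.
Qed.

Lemma crown_good (X : {set T}) : good V' X -> good V X.
Proof.
case=> sXV' tightX boundX; split; last exact: crown_deletion.
  exact: subset_trans sXV' (subsetDl _ _).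
exact: crown_tight.
Qed.

End CrownReduction.

(* If V has no crown, V :\ v satisfies Hall's condition into itself: for
   S included in V :\ v, the vertices I of S isolated in S form no crown, so
   they have at least #|I| neighbours besides v, all outside S, while the
   other vertices of S are neighbours of S. *)
Lemma no_crown_hall (V : {set T}) v :
  (forall I, ~~ crown V I) -> hall e (V :\ v) (V :\ v).
Proof.
move=> noCrown S sS; set I := [set u in S | ~~ [exists w in S, e u w]].
have sIS : I \subset S by apply/subsetP => u; rewrite inE => /andP[].
have sSV : S \subset V := subset_trans sS (subsetDl _ _).
have indI : indep I.
  by apply/indepP => u w; rewrite !inE => /andP[_ /exists_inPn noNbr] /andP[wS _]; apply: noNbr.
have sInner : S :\: I \subset nbr e (V :\ v) S.
  apply/subsetP => u; rewrite !in_setD inE negb_and negbK => /andP[uNotI uS].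
  move: uNotI; rewrite uS => /exists_inP[w wS euw]; apply/nbrP; split; first exact: (subsetP sS).
  by exists w; rewrite // esym.
have sOuter : nbr e V I :\ v \subset nbr e (V :\ v) S.
  apply/subsetP => u; rewrite in_setD1 => /andP[uv /nbrP[uV [p pI epu]]].
  by apply/nbrP; split; [rewrite in_setD1 uv | exists p => //; apply: (subsetP sIS)].
have disjoint0 : (S :\: I) :&: (nbr e V I :\ v) = set0.
  apply/setP => u; rewrite !inE; case uS: (u \in S); rewrite ?andbF //=.
  case: (boolP [exists p in I, e p u]) => [/exists_inP[p] | _]; last by rewrite !andbF.
  by rewrite inE => /andP[_ /exists_inPn/(_ u uS)]; rewrite esym => /negbTE ->.
have sUnion : (S :\: I) :|: (nbr e V I :\ v) \subset nbr e (V :\ v) S.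
  by rewrite subUset sInner sOuter.
have := subset_leq_card sUnion; rewrite cardsU disjoint0 cards0 subn0.
have := noCrown I; rewrite /crown (subset_trans sIS sSV) indI /= negb_and negbK -ltnNge.
rewrite -cards_eq0 (cardsD1 v (nbr e V I)) (card_subset_split sIS).
by case: (v \in _) => /=; lia.
Qed.

(* Without crowns, delete a vertex v of an optimal cover: OPT drops by one,
   and the all-1/2 vector certifies the deletion bound, since by
   no_crown_hall every fractional cover of V :\ v has value >= #|V :\ v| / 2. *)
Lemma no_crown_good (V C0 X : {set T}) v :
  (forall I, ~~ crown V I) -> is_vc e V C0 -> #|C0| = opt e V -> v \in C0 ->
  good (V :\ v) X -> good V (v |: X).
Proof.
move=> noCrown vcC0 c0 vC0 [sXV tightX [x fx boundx]].
have sC0V : C0 \subset V by case/vcP: vcC0.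
have vX : v \notin X by apply/negP => /(subsetP sXV); rewrite !inE eqxx.
have hopt : (opt e (V :\ v) + 1 <= opt e V)%N.
  have := opt_min (vc_restrict (subsetDl V [set v]) vcC0).
  have -> : (V :\ v) :&: C0 = C0 :\ v.
    apply/setP => u; rewrite !inE; have [uC0|] := boolP (u \in C0); last by rewrite !andbF.
    by rewrite (subsetP sC0V u uC0) !andbT.
  by rewrite -c0 (cardsD1 v C0) vC0; lia.
have hV : #|V :\ v|%:R <= \sum_(u in V :\ v) x u + \sum_(u in V :\ v) x u.
  apply: (hall_lp_bound (no_crown_hall (v := v) noCrown)) => [u uV | p q pV qV epq].
    exact: feasible_ge0 fx uV.
  by case: fx => _; apply.
split.
- by rewrite subUset sub1set (subsetP sC0V v vC0) (subset_trans sXV (subsetDl _ _)).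
- by rewrite -setDDl.
exists (fun=> 2^-1).
  by split=> [u _ | u w _ _ _]; lra.
have half : 2 * (2^-1 *+ #|V|) = #|V|%:R :> R by rewrite -mulr_natr; lra.
rewrite sumr_const half cardsU1 vX (cardsD1 v V) (subsetP sC0V v vC0).
rewrite -(ler_nat R) !natrD in hopt *; rewrite [true%:R]/=; lra.
Qed.

Lemma exists_good (V : {set T}) : exists X, good V X.
Proof.
have [n] := ubnP #|V|; elim: n V => // n IH V ltVn.
have [opt0|opt0] := eqVneq (opt e V) 0%N; first by exists set0; exact: edgeless_good.
case: (boolP [exists I, crown V I]) => [/existsP[J crownJ] | /existsPn noCrown].
  have [I crownI minI] : exists2 I, crown V I &
      forall J, crown V J -> (crown_weight V I <= crown_weight V J)%N.
    by case: (arg_minnP (crown_weight V) crownJ) => I; exists I.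
  have hallHI := min_crown_hall crownI minI.
  case/and4P: crownI => sIV I0 indI _.
  have sIHV : I :|: nbr e V I \subset V by rewrite subUset sIV nbr_sub.
  have ltV' : (#|V :\: (I :|: nbr e V I)| < n)%N.
    rewrite (card_subset_split sIHV) in ltVn.
    by have := subset_leq_card (subsetUl I (nbr e V I)); rewrite -card_gt0 in I0; lia.
  by have [X goodX] := IH _ ltV'; exists X; apply: (crown_good sIV indI hallHI).
have [C0 vcC0 c0] := opt_spec V; have sC0V : C0 \subset V by case/vcP: vcC0.
have /set0Pn[v vC0] : C0 != set0 by rewrite -card_gt0 c0 lt0n.
have ltV' : (#|V :\ v| < n)%N by rewrite (cardsD1 v V) (subsetP sC0V v vC0) in ltVn.
have [X goodX] := IH _ ltV'; exists (v |: X); exact: no_crown_good noCrown vcC0 c0 vC0 goodX.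
Qed.

End VertexCover.

Theorem mainTheorem10 (T : finType) (e : rel T)
    (esym : symmetric e) (eirr : irreflexive e)
    (R : realFieldType) (lp : R) (Hlp : is_lp_value e [set: T] lp) :
  exists X : {set T},
    (#|X|%:R <= 2 * ((opt e [set: T])%:R - lp)) /\
    is_lp_value e (~: X) ((opt e (~: X))%:R : R).
Proof.
have [X [_ tightX [x fx boundX]]] := exists_good R esym [set: T].
exists X; split.
  by case: Hlp => _ /(_ x fx); lra.
by rewrite -setTD; exact: lp_tight_value.
Qed.
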